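(* Let $H\in\mathbb{N}$, $K_p\in\mathbb{R}^{m_p\times n_p}$, $L_p\in\mathbb{R}^{n_p\times q_p}$, $\Psi_p\subseteq\mathbb{R}^{n_p}$, and let $\Omega_p\subseteq\mathbb{R}^{n_p}$ be a set containing the origin such that for all $i\in\{1,\dots,H\}$ $$(A_p^i+B_p^iK_p)\Omega_p\oplus\Big(\bigoplus_{j=0}^{i-1}A_p^jL_p(C_p\Psi_p\oplus\mathbb{V}_p)\Big)\subseteq\Omega_p,$$ where $B_p^i:=\sum_{j=0}^{i-1}A_p^jB_p$. Then with $\mu(\bar\nu_c,\hat x_p,\bar x_p):=\bar\nu_c+K_p(\hat x_p-\bar x_p)$ and $\eta(\hat x_p,\tilde x_p,\bar x_p):=0$ (''ZOH actuator''), the set $\Omega:=\Omega_p\times K_p\Omega_p\times\{0\}$ is $[1,H]$ RCI for the control error $e$.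
   Context: Setting. $A_p\in\mathbb{R}^{n_p\times n_p}$, $B_p\in\mathbb{R}^{n_p\times m_p}$, $C_p\in\mathbb{R}^{q_p\times n_p}$; $\mathbb{X}_p,\mathbb{U}_p$ closed sets containing the origin; $\mathbb{V}_p\subseteq\mathbb{R}^{q_p}$ compact convex containing the origin; integers $g\ge1$, $c\ge g$, $b\ge c$. Overall state $x=(x_p,u_s,\beta)\in\mathbb{R}^{n_p}\times\mathbb{R}^{m_p}\times\mathbb{R}$, input $u=(u_c,\gamma,u_e)\in\mathbb{R}^{m_p}\times\{0,1\}\times\mathbb{R}^{m_p}$, $$f(x,u):=\begin{bmatrix}A_px_p+B_p((1-\gamma)u_s+\gamma u_c+u_e)\\ (1-\gamma)u_s+\gamma u_c\\ \min\{\beta+g-\gamma c,\,b\}\end{bmatrix},$$ $\mathbb{X}:=\mathbb{X}_p\times\mathbb{U}_p\times\{0,\dots,b\}$, and $\Delta:=L_p(C_p\Psi_p\oplus\mathbb{V}_p)\times\{0\}\times\{0\}$. $[1,H]$ RCI sets. Given functions $\mu:\mathbb{R}^{m_p}\times\mathbb{R}^{n_p}\times\mathbb{R}^{n_p}\to\mathbb{R}^{m_p}$ and $\eta:\mathbb{R}^{n_p}\times\mathbb{R}^{n_p}\times\mathbb{R}^{n_p}\to\mathbb{R}^{m_p}$, define for $\bar\nu=(\bar\nu_c,\bar\gamma,\cdot)$ $\phi'(\bar\nu,\hat x,\tilde x,\bar x):=(\mu(\bar\nu_c,\hat x_p,\bar x_p),\,1,\,\eta(\hat x_p,\tilde x_p,\bar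 x_p))$ and $\phi''(\bar\nu,\hat x,\tilde x,\bar x):=(0,\,0,\,\eta(\hat x_p,\tilde x_p,\bar x_p))$. Given initial states $\hat x(0),\tilde x(0),\bar x(0)$, $\bar\nu_c(0)\in\mathbb{U}_p$ and $\delta(0),\dots,\delta(H-1)\in\Delta$, let $\bar\nu(0):=(\bar\nu_c(0),1,0)$, $\bar\nu(i):=(0,0,0)$ for $i\ge1$, and define for $i=0,\dots,H-1$: $\bar x(i+1)=f(\bar x(i),\bar\nu(i))$, $\tilde x(i+1)=f(\tilde x(i),u(i))$, $\hat x(i+1)=f(\hat x(i),u(i))+\delta(i)$, where $u(0)=\phi'(\bar\nu(0),\hat x(0),\tilde x(0),\bar x(0))$ and $u(i)=\phi''(\bar\nu(i),\hat x(i),\tilde x(i),\bar x(i))$ for $i\ge1$. The control error is $e(i):=\hat x(i)-\bar x(i)$. A set $\Omega\subseteq\mathbb{R}^{n_p+m_p+1}$ is called $[1,H]$ RCI for the control error $e$ (with these $\mu,\eta$) if for all $\hat x(0),\tilde x(0),\bar x(0)\in\mathbb{X}$ with $\tilde x(0)=\hat x(0)$ and $e(0)\in\Omega$, all $\bar\nu_c(0)\in\mathbb{U}_p$ and all $(\delta(i))_{i=0}^{H-1}\in\Delta^H$, it holds $e(i)\in\Omega$ for all $i\in\{1,\dots,H\}$. *)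

From HB Require Import structures.
From mathcomp Require Import all_boot all_order all_algebra.
From mathcomp Require Import all_classical all_reals all_analysis.
Set Implicit Arguments. Unset Strict Implicit. Unset Printing Implicit Defensive.
Import Order.TTheory GRing.Theory Num.Theory.
Import numFieldNormedType.Exports.
Local Open Scope classical_set_scope.
Local Open Scope ring_scope.

Section Defs.
Variable R : realType.
Variables np mp qp : nat.

Definition minksum (k : nat) (S T : set 'cV[R]_k) : set 'cV[R]_k :=
  [set s + t | s in S & t in T].
Definition mximg (k l : nat) (M : 'M[R]_(k, l)) (S : set 'cV[R]_l) : set 'cV[R]_k :=
  [set M *m s | s in S].
Definition bigminksum (k : nat) (i : nat) (F : nat -> set 'cV[R]_k) : set 'cV[R]_k :=
  \big[@minksum k/[set 0]]_(0 <= j < i) F j.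

(* overall state x = (x_p, u_s, beta), input u = (u_c, gamma, u_e) *)
Definition state := ('cV[R]_np * 'cV[R]_mp * R)%type.
Definition input := ('cV[R]_mp * bool * 'cV[R]_mp)%type.

Definition xp (x : state) := x.1.1.
Definition us (x : state) := x.1.2.
Definition beta (x : state) := x.2.

Definition f (Ap : 'M[R]_np) (Bp : 'M[R]_(np, mp)) (g c b : nat)
    (x : state) (u : input) : state :=
  let: (uc, gam, ue) := u in
  let usn := (1 - (gam%:R : R)) *: us x + (gam%:R : R) *: uc in
  (Ap *m xp x + Bp *m (usn + ue), usn,
   Num.min (beta x + g%:R - (gam%:R : R) * c%:R) b%:R).

Definition Xset (Xp : set 'cV[R]_np) (Up : set 'cV[R]_mp) (b : nat) : set state :=
  [set x | Xp (xp x) /\ Up (us x) /\ exists k : nat, (k <= b)%N /\ beta x = k%:R].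

Definition Wset (Cp : 'M[R]_(qp, np)) (Lp : 'M[R]_(np, qp))
    (Psip : set 'cV[R]_np) (Vp : set 'cV[R]_qp) : set 'cV[R]_np :=
  mximg Lp (minksum (mximg Cp Psip) Vp).

Definition Delta Cp Lp Psip Vp : set state :=
  [set d | Wset Cp Lp Psip Vp (xp d) /\ us d = 0 /\ beta d = 0].

Definition phi' (mu : 'cV[R]_mp -> 'cV[R]_np -> 'cV[R]_np -> 'cV[R]_mp)
    (eta : 'cV[R]_np -> 'cV[R]_np -> 'cV[R]_np -> 'cV[R]_mp)
    (nu : input) (xh xt xb : state) : input :=
  (mu nu.1.1 (xp xh) (xp xb), true, eta (xp xh) (xp xt) (xp xb)).
Definition phi'' (mu : 'cV[R]_mp -> 'cV[R]_np -> 'cV[R]_np -> 'cV[R]_mp)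
    (eta : 'cV[R]_np -> 'cV[R]_np -> 'cV[R]_np -> 'cV[R]_mp)
    (nu : input) (xh xt xb : state) : input :=
  (0, false, eta (xp xh) (xp xt) (xp xb)).

Definition nubar (nuc0 : 'cV[R]_mp) (i : nat) : input :=
  if i is 0 then (nuc0, true, 0) else (0, false, 0).

Fixpoint traj Ap Bp g c b mu eta (xh0 xt0 xb0 : state) (nuc0 : 'cV[R]_mp)
    (delta : nat -> state) (i : nat) : state * state * state :=
  match i with
  | 0 => (xh0, xt0, xb0)
  | i'.+1 =>
    let: (xh, xt, xb) := traj Ap Bp g c b mu eta xh0 xt0 xb0 nuc0 delta i' in
    let nu := nubar nuc0 i' in
    let u := if i' is 0 then phi' mu eta nu xh xt xb
             else phi'' mu eta nu xh xt xb in
    (f Ap Bp g c b xh u + delta i', f Ap Bp g c b xt u, f Ap Bp g c b xb nu)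
  end.

Definition ctrl_err Ap Bp g c b mu eta xh0 xt0 xb0 nuc0 delta (i : nat) : state :=
  let: (xh, _, xb) := traj Ap Bp g c b mu eta xh0 xt0 xb0 nuc0 delta i in xh - xb.

Definition RCI_1H (Ap : 'M[R]_np) (Bp : 'M[R]_(np, mp)) (Cp : 'M[R]_(qp, np))
    (Lp : 'M[R]_(np, qp)) (Psip : set 'cV[R]_np) (Vp : set 'cV[R]_qp)
    (Xp : set 'cV[R]_np) (Up : set 'cV[R]_mp) (g c b H : nat)
    mu eta (Omega : set state) : Prop :=
  forall xh0 xt0 xb0 : state,
    Xset Xp Up b xh0 -> Xset Xp Up b xt0 -> Xset Xp Up b xb0 ->
    xt0 = xh0 -> Omega (xh0 - xb0) ->
  forall nuc0 : 'cV[R]_mp, Up nuc0 ->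
  forall delta : nat -> state, (forall i, (i < H)%N -> Delta Cp Lp Psip Vp (delta i)) ->
  forall i, (1 <= i <= H)%N ->
    Omega (ctrl_err Ap Bp g c b mu eta xh0 xt0 xb0 nuc0 delta i).

End Defs.

From HB Require Import structures.
From mathcomp Require Import all_boot all_order all_algebra.
From mathcomp Require Import all_classical all_reals all_analysis.
Import Order.TTheory GRing.Theory Num.Theory.
Import numFieldNormedType.Exports.
Local Open Scope classical_set_scope.
Local Open Scope ring_scope.

(* With the ZOH actuator (eta = 0) and the feedback
   mu(nu_c, xh, xb) = nu_c + K_p (xh - xb), the nominal and the real state are
   driven by the same counter input gamma, so their counters beta stay equal
   and the control error e = xh - xb has zero beta-component.  At the first
   step both store their new input; the stored inputs differ by K_p e_p(0),
   and this difference is held for ever.  Hence the plant component of the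
   error obeys the affine recurrence
       e_p(i+1) = A_p e_p(i) + B_p (K_p e_p(0)) + d(i),
   with d(i) the plant component of the disturbance delta(i).
   The theorem follows: the closed form exhibits e_p(i) as an element of
   (A_p^i + B_p^i K_p) Omega_p (+) (+)_{j<i} A_p^j W, which lies in Omega_p. *)

Lemma bigminksum_sum (R : realType) (k : nat) (F : nat -> set 'cV[R]_k)
    (a : nat -> 'cV[R]_k) (s : seq nat) :
  (forall j, j \in s -> F j (a j)) ->
  (\big[@minksum R k/[set 0]]_(j <- s) F j) (\sum_(j <- s) a j).
Proof.
elim: s => [|x s IHs] Fa; first by rewrite !big_nil.
rewrite !big_cons; exists (a x); first by apply: Fa; rewrite mem_head.
exists (\sum_(j <- s) a j) => //; apply: IHs => j js.
by apply: Fa; rewrite in_cons js orbT.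
Qed.

Lemma affine_recurrence_closed_form (R : pzRingType) (n k : nat)
    (A : 'M[R]_n) (B : 'M[R]_(n, k)) (u : 'cV[R]_k)
    (e d : nat -> 'cV[R]_n) (m : nat) :
  (forall i, (i < m)%N -> e i.+1 = A *m e i + B *m u + d i) ->
  e m = A ^+ m *m e 0%N + (\sum_(0 <= j < m) A ^+ j *m B) *m u
        + \sum_(0 <= j < m) A ^+ j *m d (m.-1 - j)%N.
Proof.
elim: m => [|m IHm] rec.
  by rewrite !big_geq // expr0 mul1mx mul0mx !addr0.
have shiftA (F : nat -> 'M[R]_(n, _)) :
    \sum_(0 <= j < m) A ^+ j.+1 *m F j = A *m \sum_(0 <= j < m) A ^+ j *m F j.
  by rewrite mulmx_sumr; apply: eq_bigr => j _; rewrite exprS -mulmxE mulmxA.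
rewrite rec // IHm => [|i im]; last by apply: rec; apply: ltnW.
rewrite !big_nat_recl // !expr0 !mul1mx subn0 /=.
have -> : \sum_(0 <= j < m) A ^+ j.+1 *m d (m - j.+1)%N =
          \sum_(0 <= j < m) A ^+ j.+1 *m d (m.-1 - j)%N.
  by apply: eq_big_nat => j _; rewrite subnS -subn1 subnAC subn1.
rewrite !shiftA exprS -mulmxE !(mulmxDr, mulmxDl) !mulmxA.
set v := A *m (\sum_(0 <= j < m) A ^+ j *m B) *m u.
set t := A *m \sum_(0 <= j < m) A ^+ j *m d (m.-1 - j)%N.
by rewrite -!addrA; congr (_ + _); rewrite [RHS]addrCA; congr (_ + _);
   rewrite addrCA (addrC t).
Qed.

Section ErrorDynamics.
Variables (R : realType) (np mp : nat).
Variables (Ap : 'M[R]_np) (Bp : 'M[R]_(np, mp)) (g c b : nat).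

Local Notation f := (f Ap Bp g c b).

Lemma f_error_fire (x y d : state R np mp) (uc v : 'cV[R]_mp) :
  beta x = beta y ->
  let e := f x (uc + v, true, 0) + d - f y (uc, true, 0) in
  [/\ xp e = Ap *m xp (x - y) + Bp *m v + xp d, us e = v + us d
    & beta e = beta d].
Proof.
move=> bxy; rewrite /f /xp /us /beta /= in bxy *.
rewrite !subrr !scale0r !scale1r !add0r !addr0 bxy.
split.
- rewrite mulmxBr mulmxDr addrAC (addrC (Bp *m uc)) addrA.
  by rewrite (addrC (Ap *m y.1.1)) addrKA (addrAC (Ap *m x.1.1)).
- by rewrite addrAC (addrC uc) addrK.
- by rewrite addrAC subrr add0r.
Qed.

Lemma f_error_hold (x y d : state R np mp) :
  beta x = beta y ->
  let e := f x (0, false, 0) + d - f y (0, false, 0) in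
  [/\ xp e = Ap *m xp (x - y) + Bp *m us (x - y) + xp d,
      us e = us (x - y) + us d & beta e = beta d].
Proof.
move=> bxy; rewrite /f /xp /us /beta /= in bxy *.
rewrite !subr0 !scale1r !scale0r !addr0 bxy.
split.
- by rewrite !mulmxBr addrAC opprD addrACA.
- by rewrite addrAC.
- by rewrite addrAC subrr add0r.
Qed.

Variables (Kp : 'M[R]_(mp, np)) (xh0 xt0 xb0 : state R np mp).
Variables (nuc0 : 'cV[R]_mp) (delta : nat -> state R np mp) (H : nat).

Local Notation err :=
  (ctrl_err Ap Bp g c b (fun nuc xh xb => nuc + Kp *m (xh - xb))
     (fun _ _ _ => 0) xh0 xt0 xb0 nuc0 delta).
Local Notation trj :=
  (traj Ap Bp g c b (fun nuc xh xb => nuc + Kp *m (xh - xb))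
     (fun _ _ _ => 0) xh0 xt0 xb0 nuc0 delta).

Lemma ctrl_errE (i : nat) : err i = (trj i).1.1 - (trj i).2.
Proof. by rewrite /ctrl_err; case: (trj i) => [[]]. Qed.

Lemma traj_succ (i : nat) :
  trj i.+1 =
  let: (xh, xt, xb) := trj i in
  let u := if i is 0 then (nuc0 + Kp *m (xp xh - xp xb), true, 0)
           else (0, false, 0) in
  (f xh u + delta i, f xt u, f xb (nubar nuc0 i)).
Proof. by case: i. Qed.

Hypothesis beta0 : beta xh0 = beta xb0.
Hypothesis delta_plant :
  forall i, (i < H)%N -> us (delta i) = 0 /\ beta (delta i) = 0.

Lemma ctrl_err_recurrence (i : nat) : (i < H)%N ->
  [/\ xp (err i.+1) = Ap *m xp (err i) + Bp *m (Kp *m xp (err 0%N))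
                      + xp (delta i),
      us (err i.+1) = Kp *m xp (err 0%N) & beta (err i.+1) = 0].
Proof.
elim: i => [|i IHi] iH; have [us_d beta_d] := delta_plant _ iH.
  have [Ex Eu Eb] :=
    f_error_fire xh0 xb0 (delta 0%N) nuc0 (Kp *m (xp xh0 - xp xb0)) beta0.
  rewrite us_d addr0 in Eu; rewrite beta_d in Eb.
  by split; [exact: Ex | exact: Eu | exact: Eb].
have [_] := IHi (ltnW iH); rewrite !ctrl_errE [trj i.+2]traj_succ.
case: (trj i.+1) => [[xh xt] xb] us_e beta_e.
have us_xy : us (xh - xb) = Kp *m xp (err 0%N) := us_e.
have beta_xy : beta xh = beta xb.
  by apply/eqP; rewrite -subr_eq0; apply/eqP; exact: beta_e.
have [Ex Eu Eb] := f_error_hold xh xb (delta i.+1) beta_xy.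
rewrite us_xy in Ex; rewrite us_xy us_d addr0 in Eu; rewrite beta_d in Eb.
by split; [exact: Ex | exact: Eu | exact: Eb].
Qed.

Lemma ctrl_err_plant (i : nat) : (i <= H)%N ->
  xp (err i) = (Ap ^+ i + (\sum_(0 <= j < i) Ap ^+ j *m Bp) *m Kp) *m xp (err 0%N)
               + \sum_(0 <= j < i) Ap ^+ j *m xp (delta (i.-1 - j)%N).
Proof.
move=> iH; rewrite (@affine_recurrence_closed_form _ _ _ Ap Bp (Kp *m xp (err 0%N))
  (fun k => xp (err k)) (fun k => xp (delta k))) => [|k ki].
  by rewrite mulmxDl mulmxA.
by have [] := ctrl_err_recurrence k (leq_trans ki iH).
Qed.

End ErrorDynamics.

Theorem lemma2 (R : realType) (np mp qp : nat)
  (Ap : 'M[R]_np) (Bp : 'M[R]_(np, mp)) (Cp : 'M[R]_(qp, np))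
  (Xp : set 'cV[R]_np) (Up : set 'cV[R]_mp) (Vp : set 'cV[R]_qp)
  (g c b : nat)
  (HXp : closed Xp) (HXp0 : Xp 0) (HUp : closed Up) (HUp0 : Up 0)
  (HVp : compact Vp) (HVpc : convex_set (Vp : set (convex_lmodType 'cV[R]_qp)))
  (HVp0 : Vp 0)
  (Hg : (1 <= g)%N) (Hc : (g <= c)%N) (Hb : (c <= b)%N)
  (H : nat) (Kp : 'M[R]_(mp, np)) (Lp : 'M[R]_(np, qp))
  (Psip : set 'cV[R]_np) (Omegap : set 'cV[R]_np) (HO0 : Omegap 0)
  (HOmega : forall i : nat, (1 <= i <= H)%N ->
     minksum (mximg (Ap ^+ i + (\sum_(0 <= j < i) Ap ^+ j *m Bp) *m Kp) Omegap)
          (bigminksum i (fun j => mximg (Ap ^+ j) (Wset Cp Lp Psip Vp)))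
     `<=` Omegap) :
  RCI_1H Ap Bp Cp Lp Psip Vp Xp Up g c b H
    (fun nuc xh xb => nuc + Kp *m (xh - xb))
    (fun _ _ _ => 0)
    [set e | Omegap (xp e) /\ mximg Kp Omegap (us e) /\ beta e = 0].
Proof.
move=> xh0 xt0 xb0 _ _ _ _ [Oe0 [_ beta_e0]] nuc0 _ delta Hdelta [//|i].
rewrite ltnS => /andP[_ iH].
have beta0 : beta xh0 = beta xb0 by apply/eqP; rewrite -subr_eq0; apply/eqP.
have delta_plant k : (k < H)%N -> us (delta k) = 0 /\ beta (delta k) = 0.
  by move=> /Hdelta[_ []].
have [_ us_e beta_e] :=
  ctrl_err_recurrence _ _ _ Ap Bp g c b Kp _ xt0 _ nuc0 _ _ beta0 delta_plant _ iH.
split; [|split; last exact: beta_e].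
- rewrite (ctrl_err_plant _ _ _ Ap Bp g c b Kp _ xt0 _ nuc0 _ _ beta0 delta_plant _ iH).
  apply: (HOmega i.+1); first by rewrite /= iH.
  exists ((Ap ^+ i.+1 + (\sum_(0 <= j < i.+1) Ap ^+ j *m Bp) *m Kp) *m xp (xh0 - xb0)).
    by exists (xp (xh0 - xb0)).
  exists (\sum_(0 <= j < i.+1) Ap ^+ j *m xp (delta (i - j)%N)) => //.
  apply: bigminksum_sum => j; rewrite mem_index_iota => /andP[_ ji].
  exists (xp (delta (i - j)%N)) => //.
  by have [] := Hdelta (i - j)%N (leq_ltn_trans (leq_subr j i) iH).
- by rewrite us_e; exists (xp (xh0 - xb0)).
Qed.
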